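(* For $\mathbf{x}=(x_1,\dots,x_N)^{\mathrm T}\in\mathbb{R}^N$ define $$\ell_{\mathrm{bin}}(\mathbf{x})=N\sum_{n=1}^N x_n^4-\Big(\sum_{n=1}^N x_n^2\Big)^2.$$ Then $\ell_{\mathrm{bin}}(\mathbf{x})\ge0$ for all $\mathbf{x}$, and $\ell_{\mathrm{bin}}(\mathbf{x})=0$ if and only if $\mathbf{x}\in\{-\alpha,+\alpha\}^N$ for some $\alpha\in\mathbb{R}$. Furthermore, $\ell_{\mathrm{bin}}$ has no spurious stationary points: $\nabla\ell_{\mathrm{bin}}(\mathbf{x})=\mathbf{0}$ holds only if $\mathbf{x}\in\{-\alpha,+\alpha\}^N$ for some $\alpha\in\mathbb{R}$.
   Context: A spurious stationary point of a differentiable function $\ell$ whose zero set is $\mathcal{X}$ is a point $\mathbf{x}\notin\mathcal{X}$ with $\nabla\ell(\mathbf{x})=\mathbf{0}$. *)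

From HB Require Import structures.
From mathcomp Require Import all_boot all_order all_algebra.
From mathcomp Require Import all_classical all_reals all_analysis.
Set Implicit Arguments. Unset Strict Implicit. Unset Printing Implicit Defensive.
Import Order.TTheory GRing.Theory Num.Theory.
Import numFieldNormedType.Exports.
Local Open Scope ring_scope.

Definition lbin (R : realType) (N : nat) (x : 'rV[R]_N) : R :=
  N%:R * (\sum_(n < N) x ord0 n ^+ 4) - (\sum_(n < N) x ord0 n ^+ 2) ^+ 2.

Definition grad (R : realType) (N : nat) (f : 'rV[R]_N -> R) (x : 'rV[R]_N)
  : 'rV[R]_N := \row_(i < N) ('D_(delta_mx ord0 i) f x).

Definition binary_vec (R : realType) (N : nat) (x : 'rV[R]_N) : Prop :=
  exists alpha : R, forall i : 'I_N, x ord0 i = alpha \/ x ord0 i = - alpha.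

(** The quartic [lbin x] is the dispersion [N Σ a_n^2 - (Σ a_n)^2] of the squares
    [a_n = x_n^2], i.e. half the sum of all [(x_i^2 - x_j^2)^2]; hence it is
    nonnegative and vanishes exactly when all [x_n^2] agree. Being homogeneous of
    degree 4, it satisfies Euler's identity [Σ x_n ∂_n lbin(x) = 4 lbin(x)], so a
    stationary point is a zero of [lbin]. *)

From HB Require Import structures.
From mathcomp Require Import all_boot all_order all_algebra.
From mathcomp Require Import all_classical all_reals all_analysis.
From mathcomp Require Import ring.
Import Order.TTheory GRing.Theory Num.Theory.
Import numFieldNormedType.Exports.
Local Open Scope classical_set_scope.
Local Open Scope ring_scope.

(* [N^2] times the variance of the family [a]. *)
Definition dispersion {R : comPzRingType} {N : nat} (a : 'I_N -> R) : R :=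
  N%:R * \sum_(i < N) a i ^+ 2 - (\sum_(i < N) a i) ^+ 2.

Lemma sum_sqrB_pairs (R : comPzRingType) (N : nat) (a : 'I_N -> R) :
  \sum_(i < N) \sum_(j < N) (a i - a j) ^+ 2 = dispersion a *+ 2.
Proof.
have row_sum i : \sum_(j < N) (a i - a j) ^+ 2 =
    N%:R * a i ^+ 2 - (a i * \sum_(j < N) a j) *+ 2 + \sum_(j < N) a j ^+ 2.
  under eq_bigr do rewrite sqrrB.
  rewrite !big_split /= sumrN sumr_const card_ord sumrMnl -mulr_sumr.
  by rewrite mulr_natl.
under eq_bigr do rewrite row_sum.
rewrite !big_split /= sumrN sumr_const card_ord sumrMnl -!mulr_suml -mulr_sumr.
by rewrite /dispersion -mulr_natl; ring.
Qed.

Section Dispersion.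
Variables (R : realDomainType) (N : nat) (a : 'I_N -> R).

Lemma dispersion_ge0 : 0 <= dispersion a.
Proof.
have : 0 <= dispersion a *+ 2.
  by rewrite -sum_sqrB_pairs; do 2!apply: sumr_ge0 => ? _; apply: sqr_ge0.
by rewrite pmulrn_lge0.
Qed.

Lemma dispersion_eq0P : dispersion a = 0 <-> forall i j, a i = a j.
Proof.
split=> [a0 i j|a_cst].
  have pairs0 : \sum_(i < N) \sum_(j < N) (a i - a j) ^+ 2 = 0.
    by rewrite sum_sqrB_pairs a0 mul0rn.
  have row0 : \sum_(j < N) (a i - a j) ^+ 2 = 0.
    apply: (psumr_eq0P _ pairs0) => // k _.
    by apply: sumr_ge0 => l _; apply: sqr_ge0.
  have /eqP : (a i - a j) ^+ 2 = 0.
    by apply: (psumr_eq0P _ row0) => // k _; apply: sqr_ge0.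
  by rewrite sqrf_eq0 subr_eq0 => /eqP.
have : dispersion a *+ 2 = 0.
  rewrite -sum_sqrB_pairs big1 // => i _; rewrite big1 // => j _.
  by rewrite (a_cst i j) subrr expr0n.
by move/eqP; rewrite mulrn_eq0 => /eqP.
Qed.

End Dispersion.

Section LbinZeros.
Variables (R : realType) (N : nat).

Lemma lbinE (x : 'rV[R]_N) : lbin x = dispersion (fun n => x ord0 n ^+ 2).
Proof.
rewrite /lbin /dispersion; congr (_ * _ - _).
by apply: eq_bigr => n _; rewrite -exprM.
Qed.

Lemma binary_vecP (x : 'rV[R]_N) :
  binary_vec x <-> forall i j, x ord0 i ^+ 2 = x ord0 j ^+ 2.
Proof.
split=> [[alpha x_pm] i j|sqr_cst].
  by case: (x_pm i) => ->; case: (x_pm j) => ->; rewrite ?sqrrN.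
case: N x sqr_cst => [|n] x sqr_cst; first by exists 0 => -[].
exists (x ord0 ord0) => i.
by have /eqP := sqr_cst i ord0; rewrite eqf_sqr => /orP[] /eqP; [left|right].
Qed.

Lemma lbin_ge0 (x : 'rV[R]_N) : 0 <= lbin x.
Proof. by rewrite lbinE dispersion_ge0. Qed.

Lemma lbin_eq0 (x : 'rV[R]_N) : lbin x = 0 <-> binary_vec x.
Proof. by rewrite lbinE binary_vecP; exact: dispersion_eq0P. Qed.

End LbinZeros.

Global Instance is_derive_mxentry (R : numFieldType) (m n : nat)
    (i : 'I_m) (j : 'I_n) (A V : 'M[R]_(m, n)) :
  is_derive A V (fun B : 'M[R]_(m, n) => B i j) (V i j).
Proof.
(* [h *: V + A] rather than [A + h *: V]: this is the form [DeriveDef] unfolds to. *)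
have quotient_cvg : (fun h : R => h^-1 *: ((h *: V + A) i j - A i j)) @ 0^'
    --> V i j.
  apply: cvg_near_cst; near=> h.
  rewrite !mxE addrK /GRing.scale /= mulrA mulVf ?mul1r //.
  near: h; exact: nbhs_dnbhs_neq.
apply: DeriveDef; first by apply/cvg_ex; exists (V i j).
exact: cvg_lim quotient_cvg.
Unshelve. all: by end_near.
Qed.

Section LbinGradient.
Variables (R : realType) (N : nat).

Lemma grad_lbinE (x : 'rV[R]_N) (i : 'I_N) :
  grad (@lbin R N) x ord0 i =
  4%:R * x ord0 i * (N%:R * x ord0 i ^+ 2 - \sum_(n < N) x ord0 n ^+ 2).
Proof.
pose entry n (y : 'rV[R]_N) : R := y ord0 n.
have lbin_fun : @lbin R N =
    N%:R \*: (\sum_(n < N) entry n ^+ 4) - (\sum_(n < N) entry n ^+ 2) ^+ 2.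
  by apply/funext => y; rewrite /lbin /= !fct_sumE.
have delta_sum (c : 'I_N -> R) :
    \sum_(j < N) c j *: delta_mx (ord0 : 'I_1) i ord0 j = c i.
  rewrite (bigD1 i) //= big1 ?addr0; first by rewrite mxE !eqxx scaler1.
  by move=> j /negbTE ji; rewrite mxE ji andbF scaler0.
rewrite mxE lbin_fun derive_val !delta_sum fct_sumE /= /GRing.scale /=.
under eq_bigr do rewrite exprfctE.
by rewrite /entry; ring.
Qed.

Lemma sum_mul_grad_lbin (x : 'rV[R]_N) :
  \sum_(i < N) x ord0 i * grad (@lbin R N) x ord0 i = 4%:R * lbin x.
Proof.
under eq_bigr do rewrite grad_lbinE.
rewrite /lbin; set S := \sum_(n < N) x ord0 n ^+ 2.
have term i : x ord0 i * (4%:R * x ord0 i * (N%:R * x ord0 i ^+ 2 - S)) =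
    4%:R * N%:R * x ord0 i ^+ 4 - 4%:R * S * x ord0 i ^+ 2 by ring.
under eq_bigr do rewrite term.
by rewrite sumrB -!mulr_sumr -/S; ring.
Qed.

End LbinGradient.

Theorem mainTheorem3 (R : realType) (N : nat) :
  (forall x : 'rV[R]_N, 0 <= lbin x) /\
  (forall x : 'rV[R]_N, lbin x = 0 <-> binary_vec x) /\
  (forall x : 'rV[R]_N, grad (@lbin R N) x = 0 -> binary_vec x).
Proof.
split; first exact: lbin_ge0.
split; first exact: lbin_eq0.
move=> x grad0; apply/lbin_eq0.
have : 4%:R * lbin x = 0.
  by rewrite -sum_mul_grad_lbin grad0 big1 // => i _; rewrite mxE mulr0.
by move/eqP; rewrite mulf_eq0 pnatr_eq0 => /eqP.
Qed.
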